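(* For every positive integer $n$: (a) $\displaystyle\sum_{k=1}^{n}N^p(k)\,\omega(n-k)=\tau(n)$; (b) $\displaystyle\sum_{k=1}^{n}(-1)^{n-k}N^q(k)\,o(n-k)=\tau^s(n)$.
   Context: $N^p(n)$ (resp. $N^q(n)$) is the total number of parts, summed over all partitions (resp. partitions into pairwise distinct parts) of $n$. $\omega(m)=1$ if $m=0$, $\omega(m)=(-1)^k$ if $m=\frac{3k^2\pm k}{2}$ for an integer $k\ge1$, and $\omega(m)=0$ otherwise. $o(m)$ is the number of partitions of $m$ into distinct odd parts, with $o(0)=1$. $\tau(m)$ is the number of positive divisors of $m$ and $\tau^s(m)=\sum_{d\mid m,\,d\ge1}(-1)^{m/d-1}$. *)

From mathcomp Require Import all_boot all_algebra.
Set Implicit Arguments. Unset Strict Implicit. Unset Printing Implicit Defensive.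
Import GRing.Theory Num.Theory.

(* A partition of n is encoded by its multiplicity function:
   m i = number of parts equal to i (1 <= i <= n); index 0 is unused (m 0 = 0).
   Multiplicities are at most n, so 'I_n.+1 suffices as codomain. *)
Definition mult_fun n := {ffun 'I_n.+1 -> 'I_n.+1}.

Definition is_partition n (m : mult_fun n) : bool :=
  (m ord0 == ord0) && (\sum_(i < n.+1) i * m i == n)%N.

Definition is_distinct_partition n (m : mult_fun n) : bool :=
  @is_partition n m && [forall i, m i <= 1]%N.

Definition is_distinct_odd_partition n (m : mult_fun n) : bool :=
  @is_distinct_partition n m && [forall i, (m i != ord0) ==> odd i].

Definition nparts n (m : mult_fun n) : nat := (\sum_(i < n.+1) m i)%N.

Definition Np (n : nat) : nat := (\sum_(m : mult_fun n | @is_partition n m) @nparts n m)%N.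

Definition Nq (n : nat) : nat :=
  (\sum_(m : mult_fun n | @is_distinct_partition n m) @nparts n m)%N.

Definition o (n : nat) : nat := #|[pred m : mult_fun n | @is_distinct_odd_partition n m]|.

(* omega(m) = 1 if m = 0, (-1)^k if m = (3k^2 +- k)/2 with k >= 1, 0 otherwise.
   Any such k satisfies k <= m, so searching k in 'I_m.+1 is exhaustive. *)
Definition omega (m : nat) : int :=
  if m == 0%N then 1%R else
  match [pick k : 'I_m.+1 | (0 < k)%N &&
           ((m.*2 == 3 * k * k + k) || (m.*2 == 3 * k * k - k))%N] with
  | Some k => ((-1) ^+ k)%R
  | None => 0%R
  end.

Definition tau (m : nat) : nat := size (divisors m).

Definition taus (m : nat) : int := (\sum_(d <- divisors m) (-1) ^+ (m %/ d).-1)%R.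

From mathcomp Require Import all_boot all_algebra.
From mathcomp Require Import ring zify.
Set Implicit Arguments. Unset Strict Implicit. Unset Printing Implicit Defensive.
Import GRing.Theory Num.Theory.
Local Open Scope ring_scope.

(* Both identities are read off generating functions, truncated at degree n.
   Counting the parts equal to i separately for each i gives
     sum_k N^p(k) q^k = P(q) * sum_i q^i / (1 - q^i),
     sum_k N^q(k) q^k = D(q) * sum_i q^i / (1 + q^i),
   with P = prod_i 1 / (1 - q^i) and D = prod_i (1 + q^i); the two Lambert series
   have coefficients tau(n) and tau^s(n).  Euler's pentagonal number theorem
   1 / P = sum_m omega(m) q^m (through Shanks' finite form of it) and Euler's
   identity 1 / D = prod_i (1 - q^(2i-1)) = sum_m (-1)^m o(m) q^m turn the
   products into the stated convolutions. *)

Section Truncation.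
Variable R : nzRingType.
Implicit Types p q u : {poly R}.

Definition eq_upto N p q := forall i, (i <= N)%N -> p`_i = q`_i.

Lemma eq_upto_refl N p : eq_upto N p p.
Proof. by []. Qed.

Lemma eq_upto_sym N p q : eq_upto N p q -> eq_upto N q p.
Proof. by move=> e i le_iN; rewrite e. Qed.

Lemma eq_upto_trans N q p u : eq_upto N p q -> eq_upto N q u -> eq_upto N p u.
Proof. by move=> e1 e2 i le_iN; rewrite e1 // e2. Qed.

Lemma eq_upto_leq N N' p q : (N' <= N)%N -> eq_upto N p q -> eq_upto N' p q.
Proof. by move=> le e i le_iN'; apply: e; apply: leq_trans le. Qed.

Lemma eq_uptoD N p q p' q' :
  eq_upto N p p' -> eq_upto N q q' -> eq_upto N (p + q) (p' + q').
Proof. by move=> e1 e2 i le_iN; rewrite !coefD e1 // e2. Qed.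

Lemma eq_uptoM N p q p' q' :
  eq_upto N p p' -> eq_upto N q q' -> eq_upto N (p * q) (p' * q').
Proof.
move=> e1 e2 i le_iN; rewrite !coefM; apply: eq_bigr => j _.
by have lt_ji := ltn_ord j; rewrite e1 ?e2 //; lia.
Qed.

Lemma eq_upto_prod N (I : Type) (r : seq I) (P : pred I) (F G : I -> {poly R}) :
  (forall i, P i -> eq_upto N (F i) (G i)) ->
  eq_upto N (\prod_(i <- r | P i) F i) (\prod_(i <- r | P i) G i).
Proof. by move=> e; apply: (big_ind2 (eq_upto N)) => // *; apply: eq_uptoM. Qed.

Lemma eq_upto_sum N (I : Type) (r : seq I) (P : pred I) (F G : I -> {poly R}) :
  (forall i, P i -> eq_upto N (F i) (G i)) ->
  eq_upto N (\sum_(i <- r | P i) F i) (\sum_(i <- r | P i) G i).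
Proof. by move=> e; apply: (big_ind2 (eq_upto N)) => // *; apply: eq_uptoD. Qed.

Lemma eq_upto_mulXn N e p : (N < e)%N -> eq_upto N (p * 'X^e) 0.
Proof. by move=> lt_Ne i le_iN; rewrite coefMXn coef0 ifT //; lia. Qed.

Lemma eq_upto_addMXn N e p q : (N < e)%N -> eq_upto N (p + q * 'X^e) p.
Proof.
move=> lt_Ne; rewrite -[X in eq_upto _ _ X]addr0.
by apply: eq_uptoD => //; apply: eq_upto_mulXn.
Qed.

Lemma eq_upto_subMXn N e p q : (N < e)%N -> eq_upto N (p - q * 'X^e) p.
Proof. by rewrite -mulNr; apply: eq_upto_addMXn. Qed.

Lemma eq_upto_prod_widen N m m' (F : nat -> {poly R}) : (m <= m')%N ->
    (forall i, (m <= i < m')%N -> eq_upto N (F i) 1) ->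
  eq_upto N (\prod_(i < m') F i) (\prod_(i < m) F i).
Proof.
move=> le_mm' F1; rewrite (big_ord_widen m' F le_mm') [X in eq_upto _ _ X]big_mkcond.
apply: eq_upto_prod => i _; case: ifP => // /negbT; rewrite -leqNgt => le_mi.
by apply: F1; rewrite le_mi ltn_ord.
Qed.

Lemma eq_upto_sum_widen N m m' (F : nat -> {poly R}) : (m <= m')%N ->
    (forall i, (m <= i < m')%N -> eq_upto N (F i) 0) ->
  eq_upto N (\sum_(i < m') F i) (\sum_(i < m) F i).
Proof.
move=> le_mm' F0; rewrite (big_ord_widen m' F le_mm') [X in eq_upto _ _ X]big_mkcond.
apply: eq_upto_sum => i _; case: ifP => // /negbT; rewrite -leqNgt => le_mi.
by apply: F0; rewrite le_mi ltn_ord.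
Qed.

Lemma eq_upto_mulIr N p q u :
  u`_0 = 1 -> eq_upto N (p * u) (q * u) -> eq_upto N p q.
Proof.
move=> u0; elim: N => [|N IH] e i.
  by rewrite leqn0 => /eqP->; have := e 0%N isT; rewrite !coef0M u0 !mulr1.
rewrite leq_eqVlt => /orP[/eqP-> | ]; last by apply: IH => // j /leqW; apply: e.
have epq : forall j, (j <= N)%N -> p`_j = q`_j by apply: IH => j /leqW; apply: e.
have := e N.+1 (leqnn _); rewrite !coefM !(big_ord_recr N.+1) /= subnn u0 !mulr1.
suff -> : \sum_(j < N.+1) p`_j * u`_(N.+1 - j) = \sum_(j < N.+1) q`_j * u`_(N.+1 - j).
  by move/addrI.
by apply: eq_bigr => j _; rewrite epq // -ltnS.
Qed.

Lemma coef_mul_conv n (a b : nat -> R) (p q : {poly R}) :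
    p`_0 = 0 -> (forall k, (k <= n)%N -> a k = p`_k) ->
    (forall k, (k <= n)%N -> b k = q`_k) ->
  \sum_(1 <= k < n.+1) a k * b (n - k)%N = (p * q)`_n.
Proof.
move=> p0 pa qb; rewrite coefM -(big_mkord xpredT (fun k => p`_k * q`_(n - k))).
rewrite (big_ltn (ltn0Sn n)) p0 mul0r add0r.
by apply: eq_big_nat => k /andP[_ lt_kn]; rewrite pa ?qb ?leq_subr.
Qed.

End Truncation.

Section GeometricSums.
Variable R : comNzRingType.
Implicit Types y : R.

Lemma geometric_mul1B K y : (\sum_(j < K.+1) y ^+ j) * (1 - y) = 1 - y ^+ K.+1.
Proof. by rewrite -opprB mulrN mulrC -subrX1 opprB. Qed.

Lemma weighted_geometric_mul1B K y :
  (\sum_(j < K.+1) j%:R * y ^+ j) * (1 - y) =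
  \sum_(j < K) y ^+ j.+1 - K%:R * y ^+ K.+1.
Proof.
elim: K => [|K IH]; first by rewrite big_ord1 big_ord0 /=; ring.
by rewrite big_ord_recr /= mulrDl IH big_ord_recr /= -natr1 !exprS; ring.
Qed.

Lemma alternating_geometric_mul1D K y :
  (1 + y) * \sum_(j < K) (-1) ^+ j * y ^+ j.+1 = y - (-1) ^+ K * y ^+ K.+1.
Proof.
elim: K => [|K IH]; first by rewrite big_ord0 /=; ring.
by rewrite big_ord_recr /= mulrDr IH !exprS; ring.
Qed.

End GeometricSums.

Section GenPoly.
Variable R : comNzRingType.
Implicit Types (b : nat -> nat -> bool) (w : nat -> nat -> R).

Definition gen_factor M b w i : {poly R} :=
  \sum_(j < M.+1 | b i j) w i j *: 'X^(i * j).

Definition gen_poly M b w : {poly R} := \prod_(i < M.+1) gen_factor M b w i.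

Lemma coef_gen_poly M b w k :
  (gen_poly M b w)`_k =
  \sum_(f : mult_fun M | ((\sum_(i < M.+1) i * f i)%N == k) &&
                         [forall i : 'I_M.+1, b i (f i)])
     \prod_(i < M.+1) w i (f i).
Proof.
rewrite /gen_poly /gen_factor; under eq_bigr do rewrite big_mkcond.
rewrite bigA_distr_bigA coef_sum [RHS]big_mkcond; apply: eq_bigr => f _ /=.
have [/forallP bf | /forallPn[i /negbTE nbf]] := boolP [forall i : 'I_M.+1, b i (f i)].
  under eq_bigr do rewrite bf -mul_polyC.
  rewrite big_split /= -rmorph_prod prodrXr coefCM coefXn andbT eq_sym.
  by case: eqP; rewrite ?mulr1 ?mulr0.
by rewrite (bigD1 i) //= nbf mul0r coef0 andbF.
Qed.

Section Admissible.
Variable b : nat -> nat -> bool.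
Hypothesis b0j : forall j, b 0%N j = (j == 0%N).
Hypothesis bi0 : forall i, b i 0%N.

Lemma gen_factor0 M w : gen_factor M b w 0 = (w 0%N 0%N)%:P.
Proof.
rewrite /gen_factor (big_pred1 ord0) => [|j]; first by rewrite mul0n expr0 alg_polyC.
by rewrite b0j.
Qed.

Lemma gen_polyE M w : w 0%N 0%N = 1 ->
  gen_poly M b w = \prod_(i < M) gen_factor M b w i.+1.
Proof. by move=> w00; rewrite /gen_poly big_ord_recl gen_factor0 w00 mul1r. Qed.

Lemma gen_factor_level M M' w i : (M <= M')%N ->
  eq_upto M (gen_factor M' b w i) (gen_factor M b w i).
Proof.
move=> le_MM'; rewrite /gen_factor big_mkcond [X in eq_upto _ _ X]big_mkcond.
apply: (eq_upto_sum_widen (F := fun j => if b i j then w i j *: 'X^(i * j) else 0))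
  => // j /andP[lt_Mj _]; case: ifP => // bij.
have [i0 | i_gt0] := posnP i; first by move: bij; rewrite i0 b0j => /eqP; lia.
by rewrite -mul_polyC; apply: eq_upto_mulXn; apply: leq_trans lt_Mj (leq_pmull _ i_gt0).
Qed.

Lemma gen_factor_large M w i : (M < i)%N -> w i 0%N = 1 ->
  eq_upto M (gen_factor M b w i) 1.
Proof.
move=> lt_Mi wi0; rewrite /gen_factor big_mkcond.
apply: (@eq_upto_trans _ _ (\sum_(j < 1) (if b i j then w i j *: 'X^(i * j) else 0))).
  apply: (eq_upto_sum_widen (F := fun j => if b i j then w i j *: 'X^(i * j) else 0))
    => // j /andP[j_gt0 _]; case: ifP => // _.
  by rewrite -mul_polyC; apply: eq_upto_mulXn; apply: leq_trans lt_Mi (leq_pmulr _ j_gt0).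
by rewrite big_ord1 bi0 wi0 muln0 scale1r.
Qed.

Lemma gen_poly_level M M' w : (M <= M')%N -> (forall i, w i 0%N = 1) ->
  eq_upto M (gen_poly M b w) (gen_poly M' b w).
Proof.
move=> le_MM' w1; apply: eq_upto_sym.
apply: (@eq_upto_trans _ _ (\prod_(i < M'.+1) gen_factor M b w i)).
  by apply: eq_upto_prod => i _; apply: gen_factor_level.
by apply: eq_upto_prod_widen => // i /andP[lt_Mi _]; apply: gen_factor_large.
Qed.

End Admissible.
End GenPoly.

Section Lambert.
Variable R : comNzRingType.
Implicit Types g : nat -> R.

Definition lambert_term M g i : {poly R} := \sum_(j < M) g j *: 'X^(i * j.+1).

Definition lambert M g : {poly R} := \sum_(i < M) lambert_term M g i.+1.

Lemma coef_lambert_term M g i t : (0 < i)%N -> (0 < t <= M)%N ->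
  (lambert_term M g i)`_t = if (i %| t)%N then g (t %/ i)%N.-1 else 0.
Proof.
move=> i_gt0 /andP[t_gt0 le_tM].
have tE j : (t == i * j.+1) = (i %| t)%N && (j == (t %/ i).-1)%N.
  apply/eqP/andP => [-> | [/dvdnP[q tq] /eqP->]]; first by rewrite dvdn_mulr ?mulKn.
  have q_gt0 : (0 < q)%N by move: t_gt0; rewrite tq muln_gt0 => /andP[].
  by rewrite tq mulnK // prednK // mulnC.
rewrite coef_sum; under eq_bigr do rewrite coefZ coefXn tE mulr_natr mulrb.
case: (i %| t)%N; last by rewrite big1.
rewrite -big_mkcond big_ord1_eq ifT //.
have := leq_div t i; lia.
Qed.

Lemma coef_lambert M g t : (0 < t <= M)%N ->
  (lambert M g)`_t = \sum_(d <- divisors t) g (t %/ d)%N.-1.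
Proof.
move=> t_range; have /andP[t_gt0 le_tM] := t_range.
rewrite coef_sum; under eq_bigr do rewrite coef_lambert_term //.
rewrite -big_mkcond /=.
suff -> : \sum_(d <- divisors t) g (t %/ d)%N.-1 =
          \sum_(1 <= d < M.+1 | (d %| t)%N) g (t %/ d)%N.-1 by rewrite big_add1 big_mkord.
rewrite -[RHS]big_filter; apply: perm_big; apply: uniq_perm.
- exact: divisors_uniq.
- by rewrite filter_uniq ?iota_uniq.
move=> d; rewrite mem_filter mem_index_iota -dvdn_divisors //.
case: (boolP (d %| t)%N) => //= dvd_dt.
have d_gt0 : (0 < d)%N.
  by move: dvd_dt; rewrite lt0n; apply: contraTneq => ->; rewrite dvd0n -lt0n.
by rewrite d_gt0 ltnS (leq_trans (dvdn_leq t_gt0 dvd_dt)).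
Qed.

Lemma coef0_lambert M g : (lambert M g)`_0 = 0.
Proof.
rewrite coef_sum big1 // => i _; rewrite coef_sum big1 // => j _.
by rewrite coefZ coefXn eq_sym muln_eq0 /= mulr0.
Qed.

Lemma lambert_level M M' g : (M <= M')%N ->
  eq_upto M (lambert M g) (lambert M' g).
Proof.
move=> le_MM' t le_tM; have [->|t_gt0] := posnP t; first by rewrite !coef0_lambert.
by rewrite !coef_lambert // t_gt0 //= (leq_trans le_tM).
Qed.

End Lambert.

Section Marking.
Variable R : comNzRingType.
Variable b : nat -> nat -> bool.
Hypothesis b0j : forall j, b 0%N j = (j == 0%N).
Hypothesis bi0 : forall i, b i 0%N.

Definition mark (i0 : nat) : nat -> nat -> R := fun i j => if i == i0 then j%:R else 1.

Lemma prod_mark M (i0 : 'I_M.+1) (f : 'I_M.+1 -> nat) :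
  \prod_(i < M.+1) mark i0 i (f i) = (f i0)%:R.
Proof.
rewrite (bigD1 i0) //= /mark eqxx big1 ?mulr1 // => i i_neq.
by rewrite ifF //; apply: negbTE.
Qed.

Lemma gen_poly_mark_sum M (g : nat -> R) :
    (forall i, (0 < i <= M)%N -> eq_upto M (gen_factor M b (mark i) i)
                                  (gen_factor M b (fun _ _ => 1) i * lambert_term M g i)) ->
  eq_upto M (\sum_(i0 < M.+1) gen_poly M b (mark i0))
            (gen_poly M b (fun _ _ => 1) * lambert M g).
Proof.
move=> mark_factor; rewrite big_ord_recl /= /gen_poly [X in X + _](bigD1 ord0) //=.
rewrite gen_factor0 // [mark _ _ _]/= polyC0 mul0r add0r /lambert mulr_sumr.
apply: eq_upto_sum => i _; set i1 := lift ord0 i.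
rewrite (bigD1 i1) //= [X in eq_upto _ _ (X * _)](bigD1 i1) //= mulrAC.
apply: eq_uptoM; first by apply: mark_factor; rewrite /= ltn_ord.
have -> // : \prod_(k < M.+1 | k != i1) gen_factor M b (mark i1) k =
             \prod_(k < M.+1 | k != i1) gen_factor M b (fun _ _ => 1) k.
by apply: eq_bigr => k k_neq; apply: eq_bigr => j _; rewrite /mark ifF //; apply: negbTE.
Qed.

Lemma coef_mark_sum_level M k (g : nat -> R) :
    (forall M i, (0 < i <= M)%N -> eq_upto M (gen_factor M b (mark i) i)
                             (gen_factor M b (fun _ _ => 1) i * lambert_term M g i)) ->
    (k <= M)%N ->
  \sum_(i0 < k.+1) (gen_poly k b (mark i0))`_k =
  (gen_poly M b (fun _ _ => 1) * lambert M g)`_k.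
Proof.
move=> mark_factor le_kM; rewrite -coef_sum.
apply: (eq_upto_trans (gen_poly_mark_sum (mark_factor k))) => //.
by apply: eq_uptoM; [apply: (gen_poly_level b0j bi0) | apply: lambert_level].
Qed.

End Marking.

(* A multiplicity function is also defined at the unused index 0, which must get
   multiplicity 0. *)
Definition part_b (i j : nat) : bool := (i != 0%N) || (j == 0%N).
Definition distinct_b (i j : nat) : bool := part_b i j && (j <= 1)%N.
Definition odd_distinct_b (i j : nat) : bool := distinct_b i j && ((j != 0%N) ==> odd i).

Lemma part_b0j j : part_b 0 j = (j == 0%N). Proof. by []. Qed.
Lemma distinct_b0j j : distinct_b 0 j = (j == 0%N). Proof. by case: j. Qed.
Lemma odd_distinct_b0j j : odd_distinct_b 0 j = (j == 0%N). Proof. by case: j. Qed.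
Lemma part_bi0 i : part_b i 0. Proof. exact: orbT. Qed.
Lemma distinct_bi0 i : distinct_b i 0. Proof. by rewrite /distinct_b part_bi0. Qed.
Lemma odd_distinct_bi0 i : odd_distinct_b i 0. Proof. by rewrite /odd_distinct_b distinct_bi0. Qed.

Section Factors.
Variable R : comNzRingType.
Implicit Types w : nat -> nat -> R.

Lemma gen_factor_part M w i : (0 < i)%N ->
  gen_factor M part_b w i = \sum_(j < M.+1) w i j *: ('X^i) ^+ j.
Proof.
move=> i_gt0; rewrite /gen_factor (eq_bigl xpredT) => [|j]; last by rewrite /part_b -lt0n i_gt0.
by apply: eq_bigr => j _; rewrite exprM.
Qed.

Lemma gen_factor_01 M b w i : (0 < M)%N -> (forall j, (1 < j)%N -> b i j = false) ->
  gen_factor M b w i =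
  (if b i 0%N then (w i 0%N)%:P else 0) + (if b i 1%N then w i 1%N *: 'X^i else 0).
Proof.
case: M => // M _ b_le1; rewrite /gen_factor big_mkcond !big_ord_recl big1 ?addr0.
  by rewrite /= muln0 muln1 expr0 alg_polyC addr0.
by move=> j _; rewrite b_le1.
Qed.

Lemma gen_factor_distinct M w i : (0 < i <= M)%N ->
  gen_factor M distinct_b w i = (w i 0%N)%:P + w i 1%N *: 'X^i.
Proof.
move=> /andP[i_gt0 le_iM]; rewrite gen_factor_01 ?(leq_trans i_gt0) //.
  by rewrite /distinct_b /part_b -lt0n i_gt0.
by move=> j lt1j; rewrite /distinct_b leqNgt lt1j andbF.
Qed.

Lemma gen_factor_odd_distinct M i : (0 < i <= M)%N ->
  gen_factor M odd_distinct_b (fun i j => (-1) ^+ (i * j)) i =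
  1 - (odd i)%:R *: ('X^i : {poly R}).
Proof.
move=> /andP[i_gt0 le_iM]; rewrite gen_factor_01 ?(leq_trans i_gt0) //; last first.
  by move=> j lt1j; rewrite /odd_distinct_b /distinct_b leqNgt lt1j andbF.
rewrite /odd_distinct_b /distinct_b /part_b -lt0n i_gt0 /= muln0 muln1 expr0.
case: (boolP (odd i)) => odd_i; rewrite ?scale0r ?subr0 ?addr0 //.
by rewrite -signr_odd odd_i scaleN1r scale1r.
Qed.

Lemma mark_factor_part M i : (0 < i <= M)%N ->
  eq_upto M (gen_factor M part_b (mark R i) i)
    (gen_factor M part_b (fun _ _ => 1) i * lambert_term M (fun _ => 1) i).
Proof.
move=> /andP[i_gt0 le_iM]; rewrite !gen_factor_part //; set y : {poly R} := 'X^i.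
have y0 : (1 - y)`_0 = 1 by rewrite coefB coef1 coefXn (ltn_eqF i_gt0) subr0.
have lt_MiM : (M < i * M.+1)%N by rewrite (leq_trans _ (leq_pmull _ i_gt0)).
have geoE : \sum_(j < M.+1) (fun _ _ => 1) i j *: y ^+ j = \sum_(j < M.+1) y ^+ j.
  by apply: eq_bigr => j _; rewrite scale1r.
have lambertE : lambert_term M (fun _ => 1) i = \sum_(j < M) y ^+ j.+1.
  by apply: eq_bigr => j _; rewrite scale1r exprM.
rewrite geoE lambertE; apply: (eq_upto_mulIr y0).
apply: (@eq_upto_trans _ _ (\sum_(j < M) y ^+ j.+1)).
  under eq_bigr do rewrite /mark eqxx scaler_nat -mulr_natl.
  by rewrite weighted_geometric_mul1B -exprM; apply: eq_upto_subMXn.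
rewrite mulrAC geometric_mul1B mulrBl mul1r mulrC -exprM.
by apply: eq_upto_sym; apply: eq_upto_subMXn.
Qed.

Lemma mark_factor_distinct M i : (0 < i <= M)%N ->
  eq_upto M (gen_factor M distinct_b (mark R i) i)
    (gen_factor M distinct_b (fun _ _ => 1) i * lambert_term M (fun j => (-1) ^+ j) i).
Proof.
move=> i_range; have /andP[i_gt0 _] := i_range.
rewrite !gen_factor_distinct // /mark eqxx polyC0 polyC1 add0r !scale1r mulrC.
have -> : lambert_term M (fun j => (-1) ^+ j : R) i = \sum_(j < M) (-1) ^+ j * ('X^i) ^+ j.+1.
  by apply: eq_bigr => j _; rewrite -mul_polyC rmorph_sign exprM.
rewrite mulrC alternating_geometric_mul1D -exprM; apply: eq_upto_sym; apply: eq_upto_subMXn.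
by rewrite (leq_trans _ (leq_pmull _ i_gt0)).
Qed.

Definition euler_poly M : {poly R} := \prod_(i < M) (1 - 'X^(i.+1)).

Lemma gen_poly_part_euler M :
  eq_upto M (gen_poly M part_b (fun _ _ => 1) * euler_poly M) 1.
Proof.
rewrite (gen_polyE part_b0j) // /euler_poly -big_split /=.
apply: (@eq_upto_trans _ _ (\prod_(i < M) (1 : {poly R}))); last by rewrite big1.
apply: eq_upto_prod => i _; rewrite gen_factor_part //.
under eq_bigr do rewrite scale1r.
by rewrite geometric_mul1B -exprM -[X in 1 - X]mul1r; apply: eq_upto_subMXn; rewrite leq_pmull.
Qed.

Lemma gen_poly_distinctE M :
  gen_poly M distinct_b (fun _ _ => 1) = \prod_(i < M) (1 + 'X^(i.+1)) :> {poly R}.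
Proof.
rewrite (gen_polyE distinct_b0j) //; apply: eq_bigr => i _.
by rewrite gen_factor_distinct ?polyC1 ?scale1r //= ltn_ord.
Qed.

Lemma gen_poly_odd_distinctE M :
  gen_poly M odd_distinct_b (fun i j => (-1) ^+ (i * j)) =
  \prod_(i < M) (1 - (odd i.+1)%:R *: 'X^(i.+1)) :> {poly R}.
Proof.
rewrite (gen_polyE odd_distinct_b0j) //; apply: eq_bigr => i _.
by rewrite gen_factor_odd_distinct //= ltn_ord.
Qed.

Lemma prod_odd_double L :
  \prod_(i < L.*2) (1 - (odd i.+1)%:R *: 'X^(i.+1)) =
  \prod_(i < L) (1 - 'X^((i.*2).+1)) :> {poly R}.
Proof.
elim: L => [|L IH]; first by rewrite !big_ord0.
by rewrite doubleS !big_ord_recr /= IH odd_double /= scale1r scale0r subr0 mulr1.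
Qed.

Lemma euler_poly_double L :
  euler_poly L.*2 = \prod_(i < L) (1 - 'X^((i.*2).+1)) * \prod_(i < L) (1 - 'X^((i.+1).*2)).
Proof.
rewrite /euler_poly; elim: L => [|L IH]; first by rewrite !big_ord0 mulr1.
by rewrite doubleS !big_ord_recr /= IH -!mulrA; congr (_ * _); rewrite mulrCA.
Qed.

Lemma prod_distinct_euler L :
  \prod_(i < L) (1 + 'X^(i.+1)) * euler_poly L = \prod_(i < L) (1 - 'X^((i.+1).*2)).
Proof.
rewrite /euler_poly -big_split /=; apply: eq_bigr => i _.
by rewrite -muln2 exprM mulrC -subr_sqr expr1n.
Qed.

(* As (1 + q^i)(1 - q^i) = 1 - q^(2i), multiplying both sides by the even half Ev
   of the Euler product gives Ev up to degree 2L; then Ev cancels. *)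
Lemma prod_distinct_odd_double L :
  eq_upto L.*2 (\prod_(i < L.*2) (1 + 'X^(i.+1) : {poly R}) *
                \prod_(i < L) (1 - 'X^((i.*2).+1))) 1.
Proof.
set Ev : {poly R} := \prod_(i < L) (1 - 'X^((i.+1).*2)).
have Ev0 : Ev`_0 = 1.
  rewrite -horner_coef0 horner_prod big1 // => i _.
  by rewrite hornerD hornerN hornerC hornerXn expr0n subr0.
apply: (eq_upto_mulIr Ev0); rewrite mul1r -mulrA -euler_poly_double prod_distinct_euler.
apply: (eq_upto_prod_widen (F := fun i => 1 - 'X^((i.+1).*2))) => [|i /andP[le_Li _]].
  by rewrite -addnn leq_addr.
by rewrite -[X in 1 - X]mul1r; apply: eq_upto_subMXn; rewrite ltn_double ltnS.
Qed.

Lemma gen_poly_distinct_odd N :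
  eq_upto N (gen_poly N distinct_b (fun _ _ => 1) *
             gen_poly N odd_distinct_b (fun i j => (-1) ^+ (i * j))) (1 : {poly R}).
Proof.
have le_N2N : (N <= N.*2)%N by rewrite -addnn leq_addr.
apply: (@eq_upto_trans _ _ (gen_poly N.*2 distinct_b (fun _ _ => 1) *
                            gen_poly N.*2 odd_distinct_b (fun i j => (-1) ^+ (i * j)))).
  apply: eq_uptoM; first by apply: (gen_poly_level distinct_b0j distinct_bi0 le_N2N).
  by apply: (gen_poly_level odd_distinct_b0j odd_distinct_bi0 le_N2N) => i; rewrite muln0.
rewrite gen_poly_distinctE gen_poly_odd_distinctE prod_odd_double.
apply: (eq_upto_leq le_N2N); exact: prod_distinct_odd_double.
Qed.

End Factors.

Lemma bin2S_mul2 k : ('C(k.+1, 2) * 2 = k.+1 * k)%N.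
Proof. by elim: k => [|k IH] //; rewrite binS bin1; nia. Qed.

Section Pentagonal.
Variable R : comNzRingType.

Definition euler_tail n k : {poly R} := \prod_(k <= i < n) (1 - 'X^(i.+1)).

Definition shanks_term n k : {poly R} :=
  (-1) ^+ k * 'X^(n * k + 'C(k.+1, 2)) * euler_tail n k.

Definition pent_poly n : {poly R} :=
  1 + \sum_(1 <= k < n.+1) (-1) ^+ k * ('X^(k * k + 'C(k.+1, 2)) + 'X^(k * k + 'C(k, 2))).

Lemma euler_tailS n k : (k <= n)%N -> euler_tail n.+1 k = euler_tail n k * (1 - 'X^(n.+1)).
Proof. by move=> le_kn; rewrite /euler_tail big_nat_recr. Qed.

Lemma euler_tail_recl n k : (k < n)%N -> euler_tail n k = (1 - 'X^(k.+1)) * euler_tail n k.+1.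
Proof. by move=> lt_kn; rewrite /euler_tail big_ltn. Qed.

Lemma shanks_term_telescope n m : (m <= n)%N ->
  \sum_(k < m.+1) (shanks_term n.+1 k - shanks_term n k) =
  (-1) ^+ m.+1 * 'X^(n.+1 * m.+1 + 'C(m.+1, 2)) * euler_tail n m.
Proof.
elim: m => [|m IH] le_mn.
  rewrite big_ord1 /shanks_term euler_tailS // !muln0 !muln1 !addn0 !expr0 !mul1r.
  by rewrite expr1; ring.
rewrite big_ord_recr /= IH 1?ltnW // /shanks_term euler_tailS // (euler_tail_recl le_mn).
have e1 : (n.+1 * m.+1 + 'C(m.+2, 2) = n * m.+1 + 'C(m.+2, 2) + m.+1)%N by nia.
have e2 : (n.+1 * m.+2 + 'C(m.+2, 2) = n * m.+1 + 'C(m.+2, 2) + m.+1 + n.+1)%N by nia.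
have e3 : (n.+1 * m.+1 + 'C(m.+1, 2) = n * m.+1 + 'C(m.+2, 2))%N.
  by have := binS m.+1 1; rewrite bin1; nia.
by rewrite e1 e2 e3 !exprD !exprS; ring.
Qed.

Definition shanks_sum n : {poly R} := \sum_(k < n.+1) shanks_term n k.

Lemma shanks_sum_pent n : shanks_sum n = pent_poly n.
Proof.
elim: n => [|n IH].
  rewrite /shanks_sum /pent_poly big_ord1 big_geq // /shanks_term /euler_tail.
  by rewrite big_geq //= !mulr1 addr0.
have tailnn k : euler_tail k k = 1 by rewrite /euler_tail big_geq.
have -> : shanks_sum n.+1 =
    shanks_sum n + \sum_(k < n.+1) (shanks_term n.+1 k - shanks_term n k) + shanks_term n.+1 n.+1.
  rewrite /shanks_sum big_ord_recr /= -big_split /=; congr (_ + _).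
  by apply: eq_bigr => k _; ring.
rewrite shanks_term_telescope // IH /pent_poly [in RHS]big_nat_recr //= /shanks_term !tailnn.
by rewrite !mulr1 -!addrA; congr (_ + (_ + _)); ring.
Qed.

Lemma euler_poly_shanks n : eq_upto n (euler_poly R n) (shanks_sum n).
Proof.
rewrite /shanks_sum big_ord_recl /shanks_term muln0 addn0 expr0 !mul1r.
rewrite /euler_tail big_mkord -[X in eq_upto _ X _]addr0; apply: eq_uptoD => //.
apply: eq_upto_sym; apply: (@eq_upto_trans _ _ (\sum_(k < n) (0 : {poly R}))).
  apply: eq_upto_sum => k _; rewrite mulrAC; apply: eq_upto_mulXn.
  by rewrite lift0 binS bin1; nia.
by rewrite big1.
Qed.

End Pentagonal.

Definition is_pent m k := ((m.*2 == 3 * k * k + k) || (m.*2 == 3 * k * k - k))%N.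

Lemma is_pent_leq m k : is_pent m k -> (k <= m)%N.
Proof. by case/orP => /eqP; nia. Qed.

Lemma is_pent_inj m k k' : (0 < k)%N -> (0 < k')%N -> is_pent m k -> is_pent m k' -> k = k'.
Proof. by move=> k_gt0 k'_gt0; case/orP => /eqP e; case/orP => /eqP e'; nia. Qed.

Lemma is_pent_gt0 m k : (0 < m)%N -> is_pent m k -> (0 < k)%N.
Proof. by move=> m_gt0; case/orP => /eqP; nia. Qed.

Lemma omega_pent m N : (m <= N)%N ->
  omega m = (m == 0%N)%:R + \sum_(1 <= k < N.+1) (-1) ^+ k * (is_pent m k)%:R.
Proof.
move=> le_mN; rewrite /omega; have [-> | m_gt0] := posnP m.
  rewrite big_nat_cond big1 ?addr0 // => k /andP[/andP[k_gt0 _] _].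
  by case: (boolP (is_pent 0 k)) => [/is_pent_leq | _]; [lia | rewrite mulr0].
rewrite add0r; case: pickP => [k /andP[k_gt0 pent_k] | no_pent].
  have pentE j : is_pent m j = (j == k :> nat).
    apply/idP/eqP => [pent_j | ->] //.
    exact: is_pent_inj (is_pent_gt0 m_gt0 pent_j) k_gt0 pent_j pent_k.
  under eq_bigr do rewrite pentE mulr_natr mulrb.
  by rewrite -big_mkcond big_nat1_eq k_gt0 ltnS (leq_trans (is_pent_leq pent_k)).
rewrite big1 // => j _; suff -> : is_pent m j = false by rewrite mulr0.
apply/negP => pent_j; have := no_pent (inord j).
rewrite inordK ?ltnS ?(is_pent_leq pent_j) // (is_pent_gt0 m_gt0 pent_j).
by move: pent_j; rewrite /is_pent => ->.
Qed.

Lemma pent_exponents m k : (0 < k)%N ->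
  ((m == k * k + 'C(k.+1, 2))%N%:R + (m == k * k + 'C(k, 2))%N%:R : int) = (is_pent m k)%:R.
Proof.
move=> k_gt0; have h1 := bin2S_mul2 k.
have h2 : ('C(k, 2) * 2 + k = k * k)%N by case: k k_gt0 {h1} => // k _; rewrite bin2S_mul2; nia.
rewrite mulSn in h1; rewrite /is_pent -!mulnA; move: h1 h2; set K := (k * k)%N => h1 h2.
have -> : (m == K + 'C(k.+1, 2))%N = (m.*2 == 3 * K + k)%N by apply/eqP/eqP; lia.
have -> : (m == K + 'C(k, 2))%N = (m.*2 == 3 * K - k)%N by apply/eqP/eqP; lia.
by case: eqP => [p1|]; case: eqP => [p2|] //=; lia.
Qed.

Lemma coef_pent_poly n m : (m <= n)%N -> (pent_poly int n)`_m = omega m.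
Proof.
move=> le_mn; rewrite (omega_pent le_mn) coefD coef1 coef_sum; congr (_ + _).
apply: eq_big_nat => k /andP[k_gt0 _].
have -> : (-1) ^+ k = ((-1) ^+ k)%:P :> {poly int} by rewrite rmorph_sign.
by rewrite coefCM coefD !coefXn pent_exponents.
Qed.

Lemma forallb_and (T : finType) (P Q : pred T) :
  [forall x, P x && Q x] = [forall x, P x] && [forall x, Q x].
Proof.
apply/forallP/andP => [PQ | [/forallP P_ /forallP Q_] x]; last by rewrite P_ Q_.
by split; apply/forallP => x; have /andP[] := PQ x.
Qed.

Lemma forall_part_b M (f : mult_fun M) :
  [forall i : 'I_M.+1, part_b i (f i)] = (f ord0 == ord0).
Proof.
apply/forallP/eqP => [/(_ ord0) /eqP f0 | f0 i]; first exact: val_inj.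
have [i0 | i_gt0] := posnP i; last by rewrite /part_b -lt0n i_gt0.
by rewrite /part_b (_ : i = ord0) ?f0 //; apply: val_inj.
Qed.

Lemma Np_marked k : (Np k)%:Z = \sum_(i0 < k.+1) (gen_poly k part_b (mark int i0))`_k.
Proof.
rewrite /Np -natz natr_sum; under eq_bigr do rewrite /nparts natr_sum.
rewrite exchange_big; apply: eq_bigr => i0 _; rewrite coef_gen_poly.
apply: eq_big => [f | f _]; last by rewrite prod_mark.
by rewrite /is_partition forall_part_b andbC.
Qed.

Lemma Nq_marked k : (Nq k)%:Z = \sum_(i0 < k.+1) (gen_poly k distinct_b (mark int i0))`_k.
Proof.
rewrite /Nq -natz natr_sum; under eq_bigr do rewrite /nparts natr_sum.
rewrite exchange_big; apply: eq_bigr => i0 _; rewrite coef_gen_poly.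
apply: eq_big => [f | f _]; last by rewrite prod_mark.
rewrite /is_distinct_partition /is_partition /distinct_b forallb_and forall_part_b.
by rewrite andbCA andbA.
Qed.

Lemma coef_gen_poly_odd_distinct m :
  (gen_poly m odd_distinct_b (fun i j => (-1) ^+ (i * j)))`_m = (-1) ^+ m * (o m)%:Z.
Proof.
rewrite coef_gen_poly /o -sum1_card -natz natr_sum mulr_sumr.
apply: eq_big => [f | f /andP[/eqP sum_f _]]; last by rewrite prodrXr sum_f mulr1.
rewrite inE /is_distinct_odd_partition /is_distinct_partition /is_partition.
rewrite /odd_distinct_b /distinct_b !forallb_and forall_part_b !andbA.
by congr (_ && _ && _); apply: andbC.
Qed.

Lemma Np_coef k M : (k <= M)%N ->
  (Np k)%:Z = (gen_poly M part_b (fun _ _ => 1) * lambert M (fun _ => 1))`_k.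
Proof.
move=> le_kM; rewrite Np_marked.
by rewrite (coef_mark_sum_level part_b0j part_bi0 (@mark_factor_part int) le_kM).
Qed.

Lemma Nq_coef k M : (k <= M)%N ->
  (Nq k)%:Z = (gen_poly M distinct_b (fun _ _ => 1) * lambert M (fun j => (-1) ^+ j))`_k.
Proof.
move=> le_kM; rewrite Nq_marked.
by rewrite (coef_mark_sum_level distinct_b0j distinct_bi0 (@mark_factor_distinct int) le_kM).
Qed.

Lemma tau_sum n : (tau n)%:Z = \sum_(d <- divisors n) 1.
Proof. by rewrite /tau -natz -sum1_size natr_sum. Qed.

Lemma sum_Np_omega n : (0 < n)%N ->
  \sum_(1 <= k < n.+1) (Np k)%:Z * omega (n - k) = (tau n)%:Z.
Proof.
move=> n_gt0; rewrite tau_sum; set P : {poly int} := gen_poly n part_b (fun _ _ => 1).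
set T : {poly int} := lambert n (fun _ => 1).
rewrite (@coef_mul_conv _ n _ _ (P * T) (euler_poly int n)); first last.
- by move=> k le_kn; rewrite (@euler_poly_shanks int n k le_kn) shanks_sum_pent coef_pent_poly.
- by move=> k /Np_coef.
- by rewrite coef0M coef0_lambert mulr0.
rewrite mulrAC (eq_uptoM (@gen_poly_part_euler int n) (@eq_upto_refl _ n T)) //.
by rewrite mul1r coef_lambert // n_gt0 leqnn.
Qed.

Lemma sum_Nq_o n : (0 < n)%N ->
  \sum_(1 <= k < n.+1) (-1) ^+ (n - k) * (Nq k)%:Z * (o (n - k))%:Z = taus n.
Proof.
move=> n_gt0; under eq_big_nat => k _ do rewrite [_ * (Nq k)%:Z]mulrC -mulrA.
set D : {poly int} := gen_poly n distinct_b (fun _ _ => 1).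
set O : {poly int} := gen_poly n odd_distinct_b (fun i j => (-1) ^+ (i * j)).
set T : {poly int} := lambert n (fun j => (-1) ^+ j).
rewrite (@coef_mul_conv _ n _ (fun t => (-1) ^+ t * (o t)%:Z) (D * T) O); first last.
- move=> k le_kn; rewrite -coef_gen_poly_odd_distinct.
  by apply: (gen_poly_level odd_distinct_b0j odd_distinct_bi0 le_kn) => // i; rewrite muln0.
- by move=> k /Nq_coef.
- by rewrite coef0M coef0_lambert mulr0.
rewrite mulrAC (eq_uptoM (@gen_poly_distinct_odd int n) (@eq_upto_refl _ n T)) //.
by rewrite mul1r coef_lambert // n_gt0 leqnn.
Qed.

Theorem corollary5 (n : nat) (hn : (0 < n)%N) :
  (\sum_(1 <= k < n.+1) (Np k)%:Z * omega (n - k) = (tau n)%:Z) /\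
  (\sum_(1 <= k < n.+1) (-1) ^+ (n - k) * (Nq k)%:Z * (o (n - k))%:Z = taus n).
Proof. by split; [apply: sum_Np_omega | apply: sum_Nq_o]. Qed.
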